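(* Let $(Z,d)$ be a compact metric space which admits a homogeneous approximation graph. Then $Z$ has finite Assouad dimension.
   Context: A homogeneous approximation graph for $(Z,d)$ is given by a refining sequence $(\mathcal V_n)_{n\ge0}$ of finite open covers of $Z$ (so $\mathcal V_0=\{Z\}$, every element of $\mathcal V_{n+1}$ is contained in some element of $\mathcal V_n$, and $\max_{V\in\mathcal V_n}\operatorname{diam}V\to0$), together with constants $\lambda>1$, $0<\eta\le\theta$ and $C_\Gamma,N_\Gamma\in\mathbb N$ such that for every $n\in\mathbb N$: (1) $\max_{V\in\mathcal V_n}\operatorname{diam}(V)\le\lambda^{-n+1}\theta$; (2) $\operatorname{Leb}(\mathcal V_n)\ge\lambda^{-n+1}\eta$, where $\operatorname{Leb}(\mathcal U)=\min_{z\in Z}\max_{U\in\mathcal U}d(z,Z\setminus U)$; (3) each $v\in\mathcal V_n$ contains at most $C_\Gamma$ elements of $\mathcal V_{n+1}$, i.e. $\#\{w\in\mathcal V_{n+1}:w\subset v\}\le C_\Gamma$; (4) $\#\{w\in\mathcal V_n:w\cap v\ne\varnothing\}\le N_\Gamma$ for every $v\in\mathcal V_n$. The Assouad dimension is the infimum of $s\ge0$ for which there is $C$ with $\#Y\le C(b/a)^s$ whenever $0<a\le b$ and $Y\subset Z$ is finite with $a\le d(y,y')\le b$ for all distinct $y,y'\in Y$. *)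

From Stdlib Require Import Reals List.
Open Scope R_scope.

Section Metric.
Context {Z : Type} (d : Z -> Z -> R).

Definition is_metric : Prop :=
  (forall x y, 0 <= d x y) /\
  (forall x y, d x y = 0 <-> x = y) /\
  (forall x y, d x y = d y x) /\
  (forall x y z, d x z <= d x y + d y z).

Definition is_open (U : Z -> Prop) : Prop :=
  forall x, U x -> exists r, 0 < r /\ forall y, d x y < r -> U y.

Definition is_compact : Prop :=
  forall (I : Type) (U : I -> Z -> Prop),
    (forall i, is_open (U i)) ->
    (forall z, exists i, U i z) ->
    exists l : list I, forall z, exists i, In i l /\ U i z.

Definition finite_open_cover (V : list (Z -> Prop)) : Prop :=
  NoDup V /\ (forall U, In U V -> is_open U) /\
  (forall z, exists U, In U V /\ U z).

Definition diam_le (U : Z -> Prop) (c : R) : Prop :=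
  forall x y, U x -> U y -> d x y <= c.

(** Leb(V) >= c, where Leb(V) = min_z max_{U in V} d(z, Z \ U)
    and d(z, Z \ U) = inf_{y notin U} d(z,y) (= +oo if U = Z). *)
Definition leb_ge (V : list (Z -> Prop)) (c : R) : Prop :=
  forall z, exists U, In U V /\ forall y, ~ U y -> c <= d z y.

(** #{ w in W : P w } <= k *)
Definition card_le (W : list (Z -> Prop)) (P : (Z -> Prop) -> Prop) (k : nat) : Prop :=
  forall l : list (Z -> Prop), NoDup l -> (forall w, In w l -> In w W /\ P w) ->
    (length l <= k)%nat.

Definition subset (A B : Z -> Prop) : Prop := forall z, A z -> B z.
Definition meets (A B : Z -> Prop) : Prop := exists z, A z /\ B z.

Definition has_homogeneous_approximation_graph : Prop :=
  exists (V : nat -> list (Z -> Prop)) (lam eta theta : R) (CG NG : nat),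
    (forall n, finite_open_cover (V n)) /\
    V 0%nat = (fun _ : Z => True) :: nil /\
    (forall n w, In w (V (S n)) -> exists v, In v (V n) /\ subset w v) /\
    (forall eps, 0 < eps -> exists N, forall n, (N <= n)%nat ->
        forall v, In v (V n) -> diam_le v eps) /\
    1 < lam /\ 0 < eta /\ eta <= theta /\
    (forall n, (1 <= n)%nat ->
       (forall v, In v (V n) -> diam_le v (Rpower lam (- INR n + 1) * theta)) /\
       leb_ge (V n) (Rpower lam (- INR n + 1) * eta) /\
       (forall v, In v (V n) -> card_le (V (S n)) (fun w => subset w v) CG) /\
       (forall v, In v (V n) -> card_le (V n) (fun w => meets w v) NG)).

Definition assouad_admissible (s : R) : Prop :=
  exists C : R, forall a b : R, 0 < a -> a <= b ->
    forall Y : list Z, NoDup Y ->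
      (forall y y', In y Y -> In y' Y -> y <> y' -> a <= d y y' /\ d y y' <= b) ->
      INR (length Y) <= C * Rpower (b / a) s.

(** finite Assouad dimension: the infimum is over a nonempty set *)
Definition finite_assouad_dimension : Prop :=
  exists s, 0 <= s /\ assouad_admissible s.

End Metric.

From Stdlib Require Import Reals List.
From Stdlib Require Import Lia Lra Classical ClassicalEpsilon Wf_nat.
Open Scope R_scope.

(* Let Y be a finite set with a <= d y y' <= b for distinct points. Take n with
   lam^n ~ theta/a: the sets of V_(n+1) have diameter < a, so distinct points of Y
   lie in distinct such sets. If b >= eta, there are at most #V_1 * CG^n of them.
   If b < eta, take j with lam^j ~ eta/b: the Lebesgue number of V_(j+1) exceeds b,
   so one U in V_(j+1) contains Y, and the sets of V_(n+1) meeting Y descend from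
   the at most NG sets of V_(j+1) meeting U, giving at most NG * CG^(n-j).
   In both cases the exponent k satisfies lam^k <= (lam^2 theta / eta) (b/a), so
   #Y <= (NG + #V_1) (CG + 1)^k <= K (b/a)^s with s = ln (CG + 1) / ln lam. *)

Definition classicb (P : Prop) : bool :=
  if excluded_middle_informative P then true else false.

Lemma classicbP (P : Prop) : classicb P = true <-> P.
Proof. unfold classicb; destruct excluded_middle_informative; split; easy. Qed.

Lemma length_le_mul_fibers {A B : Type} (rel : A -> B -> Prop) (C : nat) (img : list B) :
  forall l : list A, NoDup l ->
  (forall x, In x l -> exists y, In y img /\ rel x y) ->
  (forall y, In y img -> forall l', NoDup l' -> incl l' l ->
     (forall x, In x l' -> rel x y) -> (length l' <= C)%nat) ->
  (length l <= C * length img)%nat.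
Proof.
  induction img as [|y img IH]; intros l Hl Hrel Hfib.
  - destruct l as [|x l]; [simpl; lia|].
    destruct (Hrel x (or_introl eq_refl)) as [y [[] _]].
  - set (related := fun x => classicb (rel x y)).
    rewrite <- (filter_length related l).
    assert (Hfib_y : (length (filter related l) <= C)%nat).
    { apply (Hfib y (or_introl eq_refl)).
      - now apply NoDup_filter.
      - intros x Hx; now apply filter_In in Hx.
      - intros x Hx; apply filter_In in Hx as [_ Hx]; now apply classicbP. }
    assert (Hothers : (length (filter (fun x => negb (related x)) l) <= C * length img)%nat).
    { apply IH.
      - now apply NoDup_filter.
      - intros x Hx; apply filter_In in Hx as [Hx Hnot].
        destruct (Hrel x Hx) as [y' [[<-|Hy'] Hxy']].
        + apply classicbP in Hxy'; unfold related in Hnot; rewrite Hxy' in Hnot; discriminate.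
        + now exists y'.
      - intros y' Hy' l' Hl' Hincl Hl'y'. apply (Hfib y' (or_intror Hy')); auto.
        intros x Hx; apply Hincl in Hx; now apply filter_In in Hx. }
    simpl; lia.
Qed.

Lemma card_le_length {Z : Type} (W : list (Z -> Prop)) (P : (Z -> Prop) -> Prop) :
  card_le W P (length W).
Proof. intros l Hl HlW; apply NoDup_incl_length; auto; intros w Hw; apply HlW, Hw. Qed.

Lemma length_filter_le_card {Z : Type} (W : list (Z -> Prop)) (P : (Z -> Prop) -> Prop) (K : nat) :
  NoDup W -> card_le W P K -> (length (filter (fun w => classicb (P w)) W) <= K)%nat.
Proof.
  intros HW HK; apply HK; [now apply NoDup_filter|].
  intros w Hw; apply filter_In in Hw as [Hw HPw]; now rewrite classicbP in HPw.
Qed.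

Lemma separated_length_le_card {Z : Type} (d : Z -> Z -> R) (W : list (Z -> Prop))
  (P : (Z -> Prop) -> Prop) (K : nat) (a c : R) (Y : list Z) :
  NoDup W -> (forall z, exists w, In w W /\ w z) ->
  (forall w, In w W -> diam_le d w c) -> c < a ->
  NoDup Y -> (forall y y', In y Y -> In y' Y -> y <> y' -> a <= d y y') ->
  (forall y w, In y Y -> In w W -> w y -> P w) ->
  card_le W P K -> (length Y <= K)%nat.
Proof.
  intros HW Hcov Hdiam Hca HY Hsep HP HK.
  apply Nat.le_trans with (1 * length (filter (fun w => classicb (P w)) W))%nat.
  - apply (length_le_mul_fibers (fun y w => w y)); auto.
    + intros y Hy; destruct (Hcov y) as [w [Hw Hwy]]; exists w; split; auto.
      apply filter_In; rewrite classicbP; eauto.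
    + intros w Hw l' Hl' Hincl Hl'w; apply filter_In in Hw as [Hw _].
      destruct l' as [|x [|x' l']]; simpl; try lia.
      assert (Hxx' : x <> x') by (inversion Hl'; simpl in *; intuition).
      assert (Hx : In x (x :: x' :: l')) by (simpl; auto).
      assert (Hx' : In x' (x :: x' :: l')) by (simpl; auto).
      pose proof (Hsep x x' (Hincl x Hx) (Hincl x' Hx') Hxx').
      pose proof (Hdiam w Hw x x' (Hl'w x Hx) (Hl'w x' Hx')).
      lra.
  - rewrite Nat.mul_1_l; now apply length_filter_le_card.
Qed.

Lemma leb_ge_contains_near_points {Z : Type} (d : Z -> Z -> R) (W : list (Z -> Prop))
  (c r : R) (z : Z) (Y : list Z) :
  leb_ge d W c -> r < c -> (forall y, In y Y -> d z y <= r) ->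
  exists U, In U W /\ forall y, In y Y -> U y.
Proof.
  intros Hleb Hrc HY; destruct (Hleb z) as [U [HU Hfar]].
  exists U; split; auto; intros y Hy.
  apply NNPP; intro HUy; specialize (Hfar y HUy); specialize (HY y Hy); lra.
Qed.

Lemma exists_least_nat (P : nat -> Prop) :
  (exists n, P n) -> exists n, P n /\ forall m, P m -> (n <= m)%nat.
Proof.
  intro HP.
  destruct (dec_inh_nat_subset_has_unique_least_element P (fun n => classic (P n)) HP)
    as [n [Hn _]].
  now exists n.
Qed.

Lemma exists_pow_gt (lam x : R) : 1 < lam -> exists n, x < lam ^ n.
Proof.
  intro Hlam; assert (Habs : Rabs lam > 1) by (rewrite Rabs_pos_eq; lra).
  destruct (Pow_x_infinity lam Habs (x + 1)) as [N HN]; exists N.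
  specialize (HN N (le_n N)); rewrite Rabs_pos_eq in HN; [lra|].
  apply pow_le; lra.
Qed.

Lemma exists_pow_scale_gt (lam a x : R) : 1 < lam -> 0 < a ->
  exists n, x < a * lam ^ n /\ a * lam ^ n <= Rmax a (lam * x).
Proof.
  intros Hlam Ha.
  destruct (exists_pow_gt lam (x / a) Hlam) as [N HN].
  destruct (exists_least_nat (fun n => x < a * lam ^ n)) as [[|n] [Hn Hmin]].
  - exists N; apply (Rmult_lt_compat_l a) in HN; auto.
    now replace (a * (x / a)) with x in HN by (field; lra).
  - exists 0%nat; split; auto; simpl; rewrite Rmult_1_r; apply Rmax_l.
  - exists (S n); split; auto.
    assert (Hnot : a * lam ^ n <= x).
    { apply Rnot_lt_le; intro Hlt; specialize (Hmin n Hlt); lia. }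
    simpl; eapply Rle_trans; [|apply Rmax_r]. nra.
Qed.

Lemma exists_pow_scale_bracket (lam b x : R) : 1 < lam -> 0 < b -> b < x ->
  exists j, b * lam ^ j < x /\ x <= b * lam ^ S j.
Proof.
  intros Hlam Hb Hbx.
  destruct (exists_pow_gt lam (x / b) Hlam) as [N HN].
  destruct (exists_least_nat (fun n => x <= b * lam ^ n)) as [[|j] [Hj Hmin]].
  - exists N; apply (Rmult_lt_compat_l b) in HN; auto.
    replace (b * (x / b)) with x in HN by (field; lra); lra.
  - simpl in Hj; lra.
  - exists j; split; auto.
    apply Rnot_le_lt; intro Hle; specialize (Hmin j Hle); lia.
Qed.

Lemma ln_nonneg (x : R) : 1 <= x -> 0 <= ln x.
Proof.
  intro Hx; rewrite <- ln_1; destruct (Req_dec x 1) as [->|Hne]; [lra|].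
  left; apply ln_increasing; lra.
Qed.

Lemma pow_le_Rpower_ln_ratio (c lam x : R) (k : nat) : 1 <= c -> 1 < lam ->
  lam ^ k <= x -> c ^ k <= Rpower x (ln c / ln lam).
Proof.
  intros Hc Hlam Hk.
  assert (Hln : 0 < ln lam) by (rewrite <- ln_1; apply ln_increasing; lra).
  assert (Hpow : c ^ k = Rpower (lam ^ k) (ln c / ln lam)).
  { rewrite <- (Rpower_pow k c) by lra; unfold Rpower; f_equal.
    rewrite ln_pow by lra; field; lra. }
  rewrite Hpow; apply Rle_Rpower_l.
  - apply Rmult_le_pos; [apply ln_nonneg; lra|left; apply Rinv_0_lt_compat, Hln].
  - split; auto; apply pow_lt; lra.
Qed.

Lemma Rpower_level (lam : R) (n : nat) : 0 < lam ->
  Rpower lam (- INR (S n) + 1) = / lam ^ n.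
Proof.
  intro Hlam; rewrite S_INR.
  replace (- (INR n + 1) + 1) with (- INR n) by ring.
  now rewrite Rpower_Ropp, Rpower_pow.
Qed.

Section HomogeneousApproximationGraph.
Variables (Z : Type) (d : Z -> Z -> R).
Hypothesis d_refl : forall x, d x x = 0.

Variables (V : nat -> list (Z -> Prop)) (lam eta theta : R) (CG NG : nat).
Hypothesis V_NoDup : forall n, NoDup (V n).
Hypothesis V_cover : forall n z, exists w, In w (V n) /\ w z.
Hypothesis V_refine : forall n w, In w (V (S n)) -> exists v, In v (V n) /\ subset w v.
Hypothesis lam_gt1 : 1 < lam.
Hypothesis eta_pos : 0 < eta.
Hypothesis eta_le_theta : eta <= theta.
Hypothesis V_diam : forall n, (1 <= n)%nat -> forall v, In v (V n) ->
  diam_le d v (Rpower lam (- INR n + 1) * theta).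
Hypothesis V_leb : forall n, (1 <= n)%nat -> leb_ge d (V n) (Rpower lam (- INR n + 1) * eta).
Hypothesis V_children : forall n, (1 <= n)%nat -> forall v, In v (V n) ->
  card_le (V (S n)) (fun w => subset w v) CG.
Hypothesis V_neighbours : forall n, (1 <= n)%nat -> forall v, In v (V n) ->
  card_le (V n) (fun w => meets w v) NG.

Lemma diam_level (n : nat) (v : Z -> Prop) : In v (V (S n)) -> diam_le d v (theta / lam ^ n).
Proof.
  intros Hv x y Hx Hy; pose proof (V_diam (S n) ltac:(lia) v Hv x y Hx Hy) as H.
  rewrite Rpower_level in H by lra; unfold Rdiv; lra.
Qed.

Lemma leb_level (n : nat) : leb_ge d (V (S n)) (eta / lam ^ n).
Proof.
  pose proof (V_leb (S n) ltac:(lia)) as H; rewrite Rpower_level in H by lra.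
  unfold Rdiv; now rewrite Rmult_comm.
Qed.

Lemma card_le_descendants (P : (Z -> Prop) -> Prop) (m K : nat) :
  (forall w v, subset w v -> P w -> P v) -> (1 <= m)%nat -> card_le (V m) P K ->
  forall k, card_le (V (m + k)) P (K * CG ^ k).
Proof.
  intros HP Hm HK k; induction k as [|k IH].
  - now rewrite Nat.add_0_r, Nat.mul_1_r.
  - intros l Hl HlV; rewrite Nat.add_succ_r in HlV.
    set (parents := filter (fun v => classicb (P v)) (V (m + k))).
    apply Nat.le_trans with (CG * length parents)%nat.
    + apply (length_le_mul_fibers subset); auto.
      * intros w Hw; destruct (HlV w Hw) as [HwV HPw].
        destruct (V_refine (m + k) w HwV) as [v [Hv Hwv]].
        exists v; split; auto; apply filter_In; rewrite classicbP; eauto.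
      * intros v Hv l' Hl' Hincl Hl'v; apply filter_In in Hv as [Hv _].
        apply (V_children (m + k) ltac:(lia) v Hv l' Hl').
        intros w Hw; split; auto; apply HlV, Hincl, Hw.
    + pose proof (length_filter_le_card _ _ _ (V_NoDup (m + k)) IH).
      rewrite Nat.pow_succ_r'.
      replace (K * (CG * CG ^ k))%nat with (CG * (K * CG ^ k))%nat by ring.
      now apply Nat.mul_le_mono_l.
Qed.

Section SeparatedSet.
Variables (a b : R) (Y : list Z).
Hypothesis a_pos : 0 < a.
Hypothesis a_le_b : a <= b.
Hypothesis Y_NoDup : NoDup Y.
Hypothesis Y_separated : forall y y', In y Y -> In y' Y -> y <> y' -> a <= d y y' /\ d y y' <= b.

Lemma separated_length_le_level (n : nat) (P : (Z -> Prop) -> Prop) (K : nat) :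
  theta < a * lam ^ n -> (forall y w, In y Y -> w y -> P w) ->
  card_le (V (S n)) P K -> (length Y <= K)%nat.
Proof.
  intros Hn HP HK.
  assert (Hpow : 0 < lam ^ n) by (apply pow_lt; lra).
  apply (separated_length_le_card d (V (S n)) P K a (theta / lam ^ n) Y); auto.
  - intros w Hw; now apply diam_level.
  - apply (Rmult_lt_reg_r (lam ^ n)); auto; unfold Rdiv.
    rewrite Rmult_assoc, Rinv_l, Rmult_1_r; lra.
  - intros y y' Hy Hy' Hne; now apply Y_separated.
  - intros y w Hy _; now apply HP.
Qed.

Lemma separated_count_coarse (n : nat) :
  eta <= b -> theta < a * lam ^ n -> a * lam ^ n <= Rmax a (lam * theta) ->
  (length Y <= length (V 1) * CG ^ n)%nat /\ a * eta * lam ^ n <= lam ^ 2 * theta * b.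
Proof.
  intros Hb Hn1 Hn2; split.
  - apply (separated_length_le_level n (fun _ => True)); auto.
    apply (card_le_descendants (fun _ => True) 1); auto using card_le_length.
  - assert (Hpow : 0 < lam ^ n) by (apply pow_lt; lra).
    assert (Hlam2 : theta * b <= lam ^ 2 * theta * b)
      by (assert (1 <= lam ^ 2) by nra; assert (0 <= theta * b) by nra; nra).
    assert (lam * theta * b <= lam ^ 2 * theta * b) by (simpl; nra).
    revert Hn2; unfold Rmax; destruct (Rle_dec a (lam * theta)); intro Hn2.
    + assert (a * eta * lam ^ n <= lam * theta * eta) by nra. nra.
    + assert (lam ^ n <= 1) by nra. nra.
Qed.

Lemma separated_count_fine (n : nat) :
  b < eta -> theta < a * lam ^ n -> a * lam ^ n <= Rmax a (lam * theta) ->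
  exists k, (length Y <= NG * CG ^ k)%nat /\ a * eta * lam ^ k <= lam ^ 2 * theta * b.
Proof.
  intros Hb Hn1 Hn2.
  destruct Y as [|y0 Y'] eqn:EY.
  { exists 0%nat; split; [simpl; lia|].
    rewrite pow_O, Rmult_1_r.
    assert (1 <= lam ^ 2) by nra. assert (a * eta <= b * theta) by nra.
    assert (0 <= (lam ^ 2 - 1) * (b * theta)) by (apply Rmult_le_pos; nra). nra. }
  rewrite <- EY in *.
  destruct (exists_pow_scale_bracket lam b eta) as [j [Hj1 Hj2]]; try lra.
  assert (Hpowj : 0 < lam ^ j) by (apply pow_lt; lra).
  assert (Hjn : (j <= n)%nat).
  { destruct (Nat.le_gt_cases j n) as [H|H]; auto.
    assert (lam ^ n <= lam ^ j) by (apply Rle_pow; lia || lra). nra. }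
  destruct (leb_ge_contains_near_points d (V (S j)) (eta / lam ^ j) b y0 Y (leb_level j))
    as [U [HU HYU]].
  { apply (Rmult_lt_reg_r (lam ^ j)); auto; unfold Rdiv.
    rewrite Rmult_assoc, Rinv_l, Rmult_1_r; lra. }
  { intros y Hy; destruct (classic (y0 = y)) as [<-|Hne]; [rewrite d_refl; lra|].
    apply Y_separated; auto; rewrite EY; simpl; auto. }
  exists (n - j)%nat; split.
  - apply (separated_length_le_level n (fun w => meets w U)); auto.
    + intros y w Hy Hw; exists y; auto.
    + replace (S n) with (S j + (n - j))%nat by lia.
      apply card_le_descendants; [|lia|now apply V_neighbours; [lia|]].
      intros w v Hwv [z [Hwz HUz]]; exists z; auto.
  - assert (Hsplit : lam ^ n = lam ^ (n - j) * lam ^ j)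
      by (rewrite <- pow_add; f_equal; lia).
    assert (Hpowk : 0 < lam ^ (n - j)) by (apply pow_lt; lra).
    rewrite Rmax_right, Hsplit in Hn2 by nra.
    simpl in Hj2 |- *.
    assert (a * eta * lam ^ (n - j) <= a * lam ^ (n - j) * (b * (lam * lam ^ j))).
    { rewrite (Rmult_comm a eta), Rmult_assoc, (Rmult_comm eta).
      apply Rmult_le_compat_l; nra. }
    assert (lam * b * (a * (lam ^ (n - j) * lam ^ j)) <= lam * b * (lam * theta))
      by (apply Rmult_le_compat_l; nra).
    nra.
Qed.

Lemma separated_count :
  exists k, (length Y <= (NG + length (V 1)) * CG ^ k)%nat /\
            a * eta * lam ^ k <= lam ^ 2 * theta * b.
Proof.
  destruct (exists_pow_scale_gt lam a theta) as [n [Hn1 Hn2]]; auto.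
  destruct (Rlt_le_dec b eta) as [Hb|Hb].
  - destruct (separated_count_fine n Hb Hn1 Hn2) as [k [Hk1 Hk2]].
    exists k; split; auto; nia.
  - destruct (separated_count_coarse n Hb Hn1 Hn2) as [Hk1 Hk2].
    exists n; split; auto; nia.
Qed.

End SeparatedSet.

Lemma assouad_admissible_ln_ratio : assouad_admissible d (ln (INR CG + 1) / ln lam).
Proof.
  set (D := lam ^ 2 * theta / eta).
  exists (INR (NG + length (V 1)) * Rpower D (ln (INR CG + 1) / ln lam)).
  intros a b Ha Hab Y HY Hsep.
  destruct (separated_count a b Y Ha Hab HY Hsep) as [k [Hk1 Hk2]].
  assert (HCG : 0 <= INR CG) by apply pos_INR.
  assert (HD : 0 < D).
  { unfold D; apply Rdiv_lt_0_compat; [apply Rmult_lt_0_compat; [apply pow_lt|]|]; lra. }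
  apply Rle_trans with (INR (NG + length (V 1)) * INR CG ^ k).
  { rewrite <- pow_INR, <- mult_INR; now apply le_INR. }
  rewrite Rmult_assoc, Rpower_mult_distr by (auto; apply Rdiv_lt_0_compat; lra).
  apply Rmult_le_compat_l; [apply pos_INR|].
  apply Rle_trans with ((INR CG + 1) ^ k); [apply pow_incr; lra|].
  apply pow_le_Rpower_ln_ratio; [lra|auto|].
  unfold D; apply (Rmult_le_reg_l (a * eta)); [nra|].
  replace (a * eta * (lam ^ 2 * theta / eta * (b / a))) with (lam ^ 2 * theta * b)
    by (field; lra).
  exact Hk2.
Qed.

End HomogeneousApproximationGraph.

Theorem proposition3p2 (Z : Type) (d : Z -> Z -> R) :
  is_metric d -> is_compact d -> has_homogeneous_approximation_graph d ->
  finite_assouad_dimension d.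
Proof.
  intros [_ [Hd _]] _
    [V [lam [eta [theta [CG [NG [Hcov [_ [Hpar [_ [Hlam [Heta [Het Hlev]]]]]]]]]]]]].
  exists (ln (INR CG + 1) / ln lam); split.
  - apply Rmult_le_pos.
    + apply ln_nonneg; pose proof (pos_INR CG); lra.
    + left; apply Rinv_0_lt_compat; rewrite <- ln_1; apply ln_increasing; lra.
  - apply (assouad_admissible_ln_ratio Z d) with V eta theta NG; auto.
    + intro x; now apply Hd.
    + intro n; apply (Hcov n).
    + intro n; apply (Hcov n).
    + intros n Hn; apply (Hlev n Hn).
    + intros n Hn; apply (Hlev n Hn).
    + intros n Hn; apply (Hlev n Hn).
    + intros n Hn; apply (Hlev n Hn).
Qed.
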